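(* Let $P$ be a strict, monotone span program on $1+n$ input bits with inner product space $V=\mathbb{C}^{[d]}$ (with standard basis $\{\lvert l\rangle\}_{l\in[d]}$), target vector $\lvert t\rangle$, and input-vector index sets $I_{1,1},\dots,I_{1+n,1}$, where $\lvert I_{1,1}\rvert=1$. For $s_1,s_2>0$, let $P'$ be either $P_{\mathrm{AND}}(s_1,s_2)$ or $P_{\mathrm{OR}}(s_1,s_2)$, and let $Q^{r\otimes}$ be the reduced tensor-product composition of $P'$ into the first input of $P$. Then $$\bigl\lVert \mathrm{abs}\bigl(B_{Q^{r\otimes}}\bigr)\bigr\rVert^2 \;\le\; \frac{\sqrt{s_1}+\sqrt{s_2}}{\sqrt{s_1+s_2}}\,\bigl\lVert \mathrm{abs}\bigl(B_{P}\bigr)\bigr\rVert^2 .$$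
   Context: A strict, monotone span program $P$ on $N$ input bits consists of a finite-dimensional inner product space $V$ over $\mathbb{C}$, a target vector $\lvert t\rangle\in V$, pairwise disjoint finite index sets $I_{k,1}$ ($k\in[N]$), and input vectors $\lvert v_i\rangle\in V$ for $i\in\bigcup_k I_{k,1}$. It computes $f_P:\{0,1\}^N\to\{0,1\}$ with $f_P(x)=1$ iff $\lvert t\rangle\in\mathrm{Span}\{\lvert v_i\rangle: i\in I_{k,1},\,x_k=1\}$. For a span program with a fixed orthonormal basis of $V$, $B_P$ denotes the matrix (in that basis) whose first column is $\lvert t\rangle$ and whose remaining columns are the input vectors $\lvert v_i\rangle$, $i\in\bigcup_k I_{k,1}$ (this is the biadjacency matrix of the associated bipartite graph on input $1^N$). $\mathrm{abs}(M)$ is the entrywise absolute value of $M$ and $\lVert\cdot\rVert$ is the operator norm. $P_{\mathrm{AND}}(s_1,s_2)$: space $\mathbb{C}^2$, target $(\alpha_1,\alpha_2)^T$, input vectors $\lvert v_1\rangle=(\beta_1,0)^T$, $\lvert v_2\rangle=(0,\beta_2)^T$, with $I_{1,1}=\{1\}$, $I_{2,1}=\{2\}$. $P_{\mathrm{OR}}(s_1,s_2)$: space $\mathbb{C}$, target $\delta$, input vectors $\lvert v_1\rangle=\epsilon_1$, $\lvert v_2\rangle=\epsilon_2$, $I_{1,1}=\{1\}$, $I_{2,1}=\{2\}$. Here $\alpha_j=\epsilon_j=(s_j/(s_1+s_2))^{1/4}$, $\beta_j=1$, $\delta=1$; both use the standard basis. Reduced tensor-product composition of $P'$ (space $V'$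 with a fixed orthonormal basis, target $\lvert t'\rangle$, input vectors $\lvert v'_{i'}\rangle$, $i'\in I'_{k,1}$, $k\in[m]$) into the first input of $P$ (space $\mathbb{C}^{[d]}$): let $Z=\{l\in[d]:\langle l\vert v_i\rangle=0\ \forall i\in I_{1,1}\}$; for $l\in[d]$ let $V_l=V'$ and $\lvert\pi_l\rangle=\lvert t'\rangle$ if $l\notin Z$, and $V_l=\mathbb{C}$, $\lvert\pi_l\rangle=\lVert\lvert t'\rangle\rVert$ if $l\in Z$. The composed program $Q^{r\otimes}$ is strict and monotone on $m+n$ bits, with space $\bigoplus_{l\in[d]}V_l$ (basis the union of the bases of the summands), target $\sum_l\langle l\vert t\rangle\lvert\pi_l\rangle_{V_l}$, input index sets $I_{11}\times I'_{k1}$ for $k\le m$ with vectors $\lvert v_{(i,i')}\rangle=\sum_l\langle l\vert v_i\rangle\lvert v'_{i'}\rangle_{V_l}$, and index sets $I_{j1}$ for the remaining inputs ($k>m$, $j=k-m+1$) with vectors $\sum_l\langle l\vert v_\iota\rangle\lvert\pi_l\rangle_{V_l}$. *)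

From mathcomp Require Import all_boot all_order all_algebra.
From mathcomp Require Import classical_sets reals.
From mathcomp.real_closed Require Import complex.
Set Implicit Arguments.
Unset Strict Implicit.
Unset Printing Implicit Defensive.
Import Order.TTheory GRing.Theory Num.Theory.
Local Open Scope ring_scope.

Definition cabs (R : realType) (z : R[i]) : R :=
  Num.sqrt (complex.Re z ^+ 2 + complex.Im z ^+ 2).

Definition cvnorm (R : realType) (T : finType) (x : T -> R[i]) : R :=
  Num.sqrt (\sum_(a : T) cabs (x a) ^+ 2).

(* A strict, monotone span program.
   - [sp_basis]: a finite type indexing a fixed orthonormal basis of V
     (so V = C^{sp_basis}; coordinates in that basis are used throughout);
   - [sp_ninp]: the number N of input bits;
   - [sp_idx]: the (finite) disjoint union of the index sets I_{k,1};
   - [sp_t]: the target vector;  [sp_v i]: the input vector |v_i>;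
   - [sp_lab i] = k (0-based) means i \in I_{k+1,1}  (so the I_{k,1} are
     pairwise disjoint by construction). *)
Record spanprog (R : realType) := SpanProg {
  sp_basis : finType;
  sp_ninp : nat;
  sp_idx : finType;
  sp_t : sp_basis -> R[i];
  sp_v : sp_idx -> sp_basis -> R[i];
  sp_lab : sp_idx -> nat }.
Arguments sp_basis {R} s.
Arguments sp_ninp {R} s.
Arguments sp_idx {R} s.
Arguments sp_t {R} s _.
Arguments sp_v {R} s _ _.
Arguments sp_lab {R} s _.

Definition sp_wf (R : realType) (P : spanprog R) : Prop :=
  forall i, (sp_lab P i < sp_ninp P)%N.

(* The index set I_{k+1,1} (0-based k). *)
Definition sp_I (R : realType) (P : spanprog R) (k : nat) : {set sp_idx P} :=
  [set i | sp_lab P i == k].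

(* B_P: first column is |t>, the remaining columns are the input vectors
   (column [None] = target, column [Some i] = |v_i>). *)
Definition Bmat (R : realType) (P : spanprog R) :
    sp_basis P -> option (sp_idx P) -> R[i] :=
  fun l c => match c with None => sp_t P l | Some i => sp_v P i l end.
Arguments Bmat {R} P _ _.

Definition absmx (R : realType) (rT cT : finType) (A : rT -> cT -> R[i]) :
    rT -> cT -> R := fun r c => cabs (A r c).

Definition opnorm (R : realType) (rT cT : finType) (A : rT -> cT -> R) : R :=
  sup [set r : R | exists x : cT -> R,
         \sum_(j : cT) x j ^+ 2 <= 1 /\
         r = Num.sqrt (\sum_(i : rT) (\sum_(j : cT) A i j * x j) ^+ 2)].

Section Composition.
Variables (R : realType) (P' P : spanprog R).

Definition rt_Z : pred (sp_basis P) :=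
  fun l => [forall i : sp_idx P, (sp_lab P i == 0%N) ==> (sp_v P i l == 0)].

(* Basis of (+)_l V_l : pairs (l, None) for l in Z (V_l = C) and
   (l, Some a) for l not in Z (V_l = V', a a basis index of V'). *)
Definition rt_basis_pred : pred (sp_basis P * option (sp_basis P')) :=
  fun la => (rt_Z la.1) == (la.2 == None).

Definition rt_basis : finType := {la : sp_basis P * option (sp_basis P') | rt_basis_pred la}.

(* Input indices: (I_{1,1} x I'_{k,1})_k  and  I_{j,1} for j >= 2. *)
Definition rt_idx : finType :=
  ({i : sp_idx P | sp_lab P i == 0%N} * sp_idx P' + {i : sp_idx P | sp_lab P i != 0%N})%type.

(* |pi_l> in V_l, written in the basis of V_l *)
Definition rt_pi (b : option (sp_basis P')) : R[i] :=
  match b with None => ((cvnorm (sp_t P'))%:C)%C | Some a => sp_t P' a end.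

Definition rt_t (x : rt_basis) : R[i] := sp_t P (val x).1 * rt_pi (val x).2.

(* for (i,i'): sum_l <l|v_i> |v'_{i'}>_{V_l}; for l in Z the coefficient
   <l|v_i> vanishes (i in I_{1,1}), so the coordinate there is 0. *)
Definition rt_v (c : rt_idx) (x : rt_basis) : R[i] :=
  match c with
  | inl (i, i') => sp_v P (val i) (val x).1 *
                   match (val x).2 with None => 0 | Some a => sp_v P' i' a end
  | inr j => sp_v P (val j) (val x).1 * rt_pi (val x).2
  end.

Definition rt_lab (c : rt_idx) : nat :=
  match c with
  | inl (_, i') => sp_lab P' i'
  | inr j => (sp_ninp P' + sp_lab P (val j) - 1)%N
  end.

(* Q^{r (x)} : reduced tensor-product composition of P' into the first
   input of P, on m + n bits where m = #inputs of P', 1 + n = #inputs of P. *)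
Definition rtcomp : spanprog R :=
  @SpanProg R rt_basis (sp_ninp P' + (sp_ninp P - 1)) rt_idx rt_t rt_v rt_lab.

End Composition.

(* alpha_j = eps_j = (s_j / (s1 + s2))^(1/4), j in {0,1} (0-based). *)
Definition quartic_weight (R : realType) (s1 s2 : R) (j : 'I_2) : R :=
  Num.sqrt (Num.sqrt ((if j == ord0 then s1 else s2) / (s1 + s2))).

Definition P_AND (R : realType) (s1 s2 : R) : spanprog R :=
  @SpanProg R 'I_2 2 'I_2
    (fun l => ((quartic_weight s1 s2 l)%:C)%C)
    (fun i l => if i == l then 1 else 0)
    (fun i => nat_of_ord i).

Definition P_OR (R : realType) (s1 s2 : R) : spanprog R :=
  @SpanProg R 'I_1 2 'I_2
    (fun _ => 1)
    (fun i _ => ((quartic_weight s1 s2 i)%:C)%C)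
    (fun i => nat_of_ord i).

From mathcomp Require Import all_boot all_order all_algebra.
From mathcomp Require Import classical_sets reals.
From mathcomp.real_closed Require Import complex.
From mathcomp Require Import ring lra.
Import Order.TTheory GRing.Theory Num.Theory.
Local Open Scope ring_scope.
Set Implicit Arguments.
Unset Strict Implicit.
Unset Printing Implicit Defensive.

(** Let [x] be a unit vector on the columns of [Q].  All entries of [abs(B_Q)]
    are nonnegative, so we may replace [x] by [|x|].  Merging the coordinates
    [x_(i0,i')] of the composed first input into the single coordinate [i0] of
    [P], carrying their Euclidean norm, gives a unit vector [x'] on the columns
    of [P].  The rows of [abs(B_Q)] are grouped in blocks, one for each row [l]
    of [P], and it suffices to bound the squared norm of each block by the gain
    [(sqrt s1 + sqrt s2) / sqrt (s1 + s2)] times the square of row [l] of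
    [abs(B_P)] applied to [x'].  For [l] in [Z] only the target contributes,
    scaled by [||t'||], whose square is the gain for AND and 1 for OR.  For the
    other rows this is a two-dimensional Cauchy-Schwarz estimate, since the
    squared weights of [P'] sum to the gain, which is at least 1. *)

Section ComplexModulus.
Variable R : realType.
Implicit Types z w : R[i].

Lemma cabs_normc z : cabs z = Normc.normc z.
Proof. by case: z. Qed.

Lemma cabs_ge0 z : 0 <= cabs z.
Proof. exact: sqrtr_ge0. Qed.

Lemma cabs0 : cabs (0 : R[i]) = 0.
Proof. by rewrite cabs_normc Normc.normc0. Qed.

Lemma cabs1 : cabs (1 : R[i]) = 1.
Proof. by rewrite cabs_normc Normc.normc1. Qed.

Lemma cabsM z w : cabs (z * w) = cabs z * cabs w.
Proof. by rewrite !cabs_normc Normc.normcM. Qed.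

Lemma cabs_real (r : R) : cabs (r%:C)%C = `|r|.
Proof. by rewrite /cabs /= expr0n addr0 sqrtr_sqr. Qed.

End ComplexModulus.

Lemma big_option (R : Type) (idx : R) (op : Monoid.law idx) (T : finType)
    (F : option T -> R) :
  \big[op/idx]_(o : option T) F o = op (F None) (\big[op/idx]_(t : T) F (Some t)).
Proof.
by rewrite ![index_enum _]unlock [@Finite.enum in LHS]unlock /= big_cons big_map.
Qed.

Lemma big_sig (R : Type) (idx : R) (op : Monoid.com_law idx) (T : finType)
    (p : pred T) (F : T -> R) :
  \big[op/idx]_(j : {i | p i}) F (val j) = \big[op/idx]_(i | p i) F i.
Proof.
rewrite (reindex_omap (val : {i | p i} -> T) insub) => [|i p_i]; last first.
  by rewrite insubT.
by apply: eq_bigl => -[i p_i] /=; rewrite insubT ?p_i /= eqxx.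
Qed.

Section Cauchy2.
Variable R : rcfType.
Implicit Types a b c d : R.

Lemma cauchy_schwarz2 a b c d :
  a * c + b * d <= Num.sqrt (a ^+ 2 + b ^+ 2) * Num.sqrt (c ^+ 2 + d ^+ 2).
Proof.
apply: le_trans (ler_norm _) _.
rewrite -sqrtr_sqr -sqrtrM ?addr_ge0 ?sqr_ge0 //; apply: ler_wsqrtr.
rewrite -subr_ge0.
have -> : (a ^+ 2 + b ^+ 2) * (c ^+ 2 + d ^+ 2) - (a * c + b * d) ^+ 2
   = (a * d - b * c) ^+ 2 by ring.
exact: sqr_ge0.
Qed.

Lemma sqrtr_le_self c : 1 <= c -> Num.sqrt c <= c.
Proof.
move=> c_ge1; have c_ge0 : 0 <= c := le_trans ler01 c_ge1.
rewrite -{2}(sqr_sqrtr c_ge0) expr2 ler_peMl ?sqrtr_ge0 //.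
by rewrite -sqrtr1 ler_wsqrtr.
Qed.

End Cauchy2.

Section BlockInequalities.
Variable R : rcfType.
Variables (a b y0 y1 W U : R).
Hypotheses (W_ge0 : 0 <= W) (U_ge0 : 0 <= U) (ab_ge1 : 1 <= a ^+ 2 + b ^+ 2).
Let c := a ^+ 2 + b ^+ 2.
Let z := Num.sqrt (y0 ^+ 2 + y1 ^+ 2).

Lemma and_block_ineq :
  (a * W + U * y0) ^+ 2 + (b * W + U * y1) ^+ 2 <= c * (W + U * z) ^+ 2.
Proof.
have z_sqr : z ^+ 2 = y0 ^+ 2 + y1 ^+ 2 by rewrite sqr_sqrtr // addr_ge0 ?sqr_ge0.
have cross_le : a * y0 + b * y1 <= c * z.
  apply: le_trans (cauchy_schwarz2 a b y0 y1) _.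
  by rewrite ler_wpM2r ?sqrtr_ge0 // sqrtr_le_self.
have -> : (a * W + U * y0) ^+ 2 + (b * W + U * y1) ^+ 2 =
    c * W ^+ 2 + 2 * (W * U) * (a * y0 + b * y1) + U ^+ 2 * z ^+ 2.
  by rewrite z_sqr /c; ring.
have WU_ge0 : 0 <= W * U := mulr_ge0 W_ge0 U_ge0.
have Uz_ge0 : 0 <= U ^+ 2 * z ^+ 2 by rewrite mulr_ge0 ?sqr_ge0.
move: ab_ge1; rewrite -/c => c_ge1; nra.
Qed.

Hypotheses (a_ge0 : 0 <= a) (b_ge0 : 0 <= b) (y0_ge0 : 0 <= y0) (y1_ge0 : 0 <= y1).

Lemma or_block_ineq : (W + U * (a * y0 + b * y1)) ^+ 2 <= c * (W + U * z) ^+ 2.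
Proof.
have r_ge1 : 1 <= Num.sqrt c by rewrite -sqrtr1 ler_wsqrtr.
have cross_le := cauchy_schwarz2 a b y0 y1; rewrite -/c -/z in cross_le.
have z_ge0 : 0 <= z := sqrtr_ge0 _.
have row_le : W + U * (a * y0 + b * y1) <= Num.sqrt c * (W + U * z).
  have := ler_wpM2l U_ge0 cross_le.
  have : 0 <= (Num.sqrt c - 1) * W by rewrite mulr_ge0 // subr_ge0.
  set r := Num.sqrt c; set s := a * y0 + b * y1; nra.
have c_ge0 : 0 <= c := le_trans ler01 ab_ge1.
rewrite -(sqr_sqrtr c_ge0) -exprMn lerXn2r ?nnegrE //.
  by rewrite addr_ge0 ?mulr_ge0 ?addr_ge0 ?mulr_ge0.
by rewrite mulr_ge0 ?addr_ge0 ?mulr_ge0 ?sqrtr_ge0.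
Qed.

End BlockInequalities.

Section OperatorNorm.
Variable R : realType.

Definition sqnorm (T : finType) (x : T -> R) : R := \sum_t x t ^+ 2.

Definition apply_mx (rT cT : finType) (A : rT -> cT -> R) (x : cT -> R) :
  rT -> R := fun i => \sum_j A i j * x j.

Lemma sqnorm_ge0 (T : finType) (x : T -> R) : 0 <= sqnorm x.
Proof. by apply: sumr_ge0 => t _; exact: sqr_ge0. Qed.

Lemma sqr_le_sqnorm (T : finType) (x : T -> R) t : x t ^+ 2 <= sqnorm x.
Proof.
rewrite /sqnorm (bigD1 t) //= lerDl.
by apply: sumr_ge0 => s _; exact: sqr_ge0.
Qed.

Variables (rT cT : finType).
Implicit Types (A : rT -> cT -> R) (x : cT -> R).

Lemma opnorm_has_sup A :
  has_sup [set r : R | exists x, sqnorm x <= 1 /\ r = Num.sqrt (sqnorm (apply_mx A x))].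
Proof.
split.
  exists (Num.sqrt (sqnorm (apply_mx A (fun=> 0)))); exists (fun=> 0); split=> //.
  by rewrite /sqnorm big1 // => j _; rewrite expr0n.
exists (Num.sqrt (\sum_i (\sum_j `|A i j|) ^+ 2)) => _ [x [x_le1 ->]].
apply: ler_wsqrtr; apply: ler_sum => i _.
rewrite -[leLHS]real_normK ?num_real // lerXn2r ?nnegrE ?sumr_ge0 //.
apply: le_trans (ler_norm_sum _ _ _) _; apply: ler_sum => j _.
rewrite normrM ler_piMr //.
by rewrite -(@ler_pXn2r _ 2) ?nnegrE // expr1n real_normK ?num_real
   ?(le_trans (sqr_le_sqnorm x j)).
Qed.

Lemma apply_mx_le_opnorm A x :
  sqnorm x <= 1 -> Num.sqrt (sqnorm (apply_mx A x)) <= opnorm A.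
Proof. by move=> x_le1; apply: (sup_upper_bound (opnorm_has_sup A)); exists x. Qed.

Lemma opnorm_ge0 A : 0 <= opnorm A.
Proof.
apply: le_trans (apply_mx_le_opnorm A (x := fun=> 0) _); first exact: sqrtr_ge0.
by rewrite /sqnorm big1 // => j _; rewrite expr0n.
Qed.

Lemma sqnorm_apply_mx_abs A x : (forall i j, 0 <= A i j) ->
  sqnorm (apply_mx A x) <= sqnorm (apply_mx A (fun j => `|x j|)).
Proof.
move=> A_ge0; apply: ler_sum => i _.
have Ax_ge0 : 0 <= apply_mx A (fun j => `|x j|) i.
  by apply: sumr_ge0 => j _; rewrite mulr_ge0.
rewrite -[leLHS]real_normK ?num_real // lerXn2r ?nnegrE //.
apply: le_trans (ler_norm_sum _ _ _) _.
by apply: ler_sum => j _; rewrite normrM ger0_norm.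
Qed.

End OperatorNorm.

Lemma opnorm_sqr_le (R : realType) (rT cT rT' cT' : finType)
    (A : rT -> cT -> R) (B : rT' -> cT' -> R) (k : R) : 0 <= k ->
  (forall x, sqnorm x <= 1 ->
     exists2 x', sqnorm x' <= 1 & sqnorm (apply_mx B x) <= k * sqnorm (apply_mx A x')) ->
  opnorm B ^+ 2 <= k * opnorm A ^+ 2.
Proof.
move=> k_ge0 dominated.
have opB_le : opnorm B <= Num.sqrt k * opnorm A.
  apply: ge_sup; first by case: (opnorm_has_sup B).
  move=> _ [x [x_le1 ->]]; have [x' x'_le1 Bx_le] := dominated x x_le1.
  apply: le_trans (ler_wsqrtr Bx_le) _.
  by rewrite sqrtrM // ler_wpM2l ?sqrtr_ge0 ?apply_mx_le_opnorm.
rewrite -[k in leRHS](sqr_sqrtr k_ge0) -exprMn lerXn2r ?nnegrE ?opnorm_ge0 //.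
by rewrite mulr_ge0 ?sqrtr_ge0 ?opnorm_ge0.
Qed.

Section CompositionRows.
Variables (R : realType) (P' P : spanprog R) (i0 : sp_idx P).
Hypothesis first_inputE : forall i, (sp_lab P i == 0%N) = (i == i0).

Local Notation Q := (rtcomp P' P).
Local Notation first_idx := {i : sp_idx P | sp_lab P i == 0%N}.
Local Notation other_idx := {i : sp_idx P | sp_lab P i != 0%N}.

Definition first_input : first_idx := Sub i0 (etrans (first_inputE i0) (eqxx i0)).

Lemma first_inputP (j : first_idx) : j = first_input.
Proof. by apply: val_inj; apply/eqP; rewrite -first_inputE; exact: valP j. Qed.

Lemma sum_first_idx (F : first_idx -> R) : \sum_j F j = F first_input.
Proof.
rewrite (bigD1 first_input) //= big1 ?addr0 // => j.
by rewrite (first_inputP j) eqxx.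
Qed.

Lemma sum_other_idx (F : other_idx -> R) :
  \sum_j F j = \sum_(i | i != i0) oapp F 0 (insub i).
Proof.
rewrite (eq_bigl (fun i => sp_lab P i != 0%N)) => [|i]; last by rewrite first_inputE.
rewrite -[RHS]big_sig; apply: eq_bigr => j _; by rewrite valK.
Qed.

Lemma sum_first_pairs (F : first_idx * sp_idx P' -> R) :
  \sum_p F p = \sum_i' F (first_input, i').
Proof.
rewrite (eq_bigr (fun p => F (p.1, p.2))); last by case.
by rewrite -(pair_bigA _ (fun j i' => F (j, i'))) sum_first_idx.
Qed.

Section Vector.
Variable x : option (rt_idx P' P) -> R.

Definition inner_coords (i' : sp_idx P') : R := `|x (Some (inl (first_input, i')))|.

Definition inner_norm : R := Num.sqrt (sqnorm inner_coords).

Definition outer_row (l : sp_basis P) : R :=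
  cabs (sp_t P l) * `|x None| +
  \sum_(j : other_idx) cabs (sp_v P (val j) l) * `|x (Some (inr j))|.

Definition first_coef (l : sp_basis P) : R := cabs (sp_v P i0 l).

Definition comp_row (l : sp_basis P) (b : option (sp_basis P')) : R :=
  cabs (rt_pi b) * outer_row l +
  first_coef l * oapp (fun a => \sum_i' cabs (sp_v P' i' a) * inner_coords i') 0 b.

Lemma apply_comp_abs (r : rt_basis P' P) :
  apply_mx (absmx (Bmat Q)) (fun c => `|x c|) r = comp_row (val r).1 (val r).2.
Proof.
rewrite /apply_mx big_option big_sumType /= sum_first_pairs.
rewrite /comp_row /outer_row /first_coef /absmx /= /rt_t /rt_v /=.
case: r => -[l b] /= _; rewrite cabsM mulrDr mulr_sumr -!addrA.
congr (_ + _); first by ring.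
rewrite addrC; congr (_ + _).
  by apply: eq_bigr => j _; rewrite cabsM; ring.
case: b => [a|] /=.
  by rewrite mulr_sumr; apply: eq_bigr => i' _; rewrite cabsM /inner_coords; ring.
by rewrite mulr0 big1 => [|i' _]; rewrite ?mulr0 ?cabs0 ?mul0r.
Qed.

Definition block_sqnorm (l : sp_basis P) : R :=
  \sum_(b | rt_Z l == (b == None)) comp_row l b ^+ 2.

Lemma sqnorm_apply_comp_abs :
  sqnorm (apply_mx (absmx (Bmat Q)) (fun c => `|x c|)) = \sum_l block_sqnorm l.
Proof.
rewrite /sqnorm (eq_bigr (fun r => comp_row (val r).1 (val r).2 ^+ 2)) => [|r _];
  last by rewrite apply_comp_abs.
rewrite (big_sig _ _ (fun p => comp_row p.1 p.2 ^+ 2)) pair_big_dep /=.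
by apply: eq_bigl => -[l b].
Qed.

Lemma block_sqnorm_Z l : rt_Z l -> block_sqnorm l = comp_row l None ^+ 2.
Proof.
move=> Zl; rewrite /block_sqnorm big_mkcond big_option /= Zl eqxx /=.
by rewrite big1 ?addr0.
Qed.

Lemma block_sqnorm_nZ l : ~~ rt_Z l -> block_sqnorm l = \sum_a comp_row l (Some a) ^+ 2.
Proof.
move=> nZl; rewrite /block_sqnorm big_mkcond big_option /= (negPf nZl) /= add0r.
exact: eq_bigr.
Qed.

Lemma first_coef_Z l : rt_Z l -> first_coef l = 0.
Proof.
move=> /forallP /(_ i0); rewrite first_inputE eqxx => /eqP v_l0.
by rewrite /first_coef v_l0 cabs0.
Qed.

Lemma outer_row_ge0 l : 0 <= outer_row l.
Proof.
by rewrite addr_ge0 ?mulr_ge0 ?cabs_ge0 // sumr_ge0 // => j _; rewrite mulr_ge0 ?cabs_ge0.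
Qed.

Definition collapsed (c : option (sp_idx P)) : R :=
  if c is Some i then
    if i == i0 then inner_norm else oapp (fun j => `|x (Some (inr j))|) 0 (insub i)
  else `|x None|.

Lemma sqnorm_collapsed : sqnorm collapsed = sqnorm x.
Proof.
have absx_sqr c : `|x c| ^+ 2 = x c ^+ 2 by rewrite real_normK ?num_real.
rewrite /sqnorm !big_option big_sumType sum_first_pairs /= absx_sqr; congr (_ + _).
rewrite (bigD1 i0) //= eqxx sqr_sqrtr ?sqnorm_ge0 //; congr (_ + _).
  by apply: eq_bigr => i' _; rewrite /inner_coords absx_sqr.
rewrite sum_other_idx; apply: eq_bigr => i /negPf ->.
by case: (insub i) => [j|] /=; rewrite ?absx_sqr ?expr0n.
Qed.

Lemma apply_collapsed l :
  apply_mx (absmx (Bmat P)) collapsed l = outer_row l + first_coef l * inner_norm.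
Proof.
rewrite /apply_mx big_option (bigD1 i0) //= eqxx /outer_row /first_coef /absmx /=.
rewrite -addrA; congr (_ + _); rewrite addrC; congr (_ + _).
rewrite sum_other_idx; apply: eq_bigr => i /negPf ->.
by case: insubP => [j _ <-|_] /=; rewrite ?mulr0.
Qed.

Lemma comp_dominated k :
  (forall l, block_sqnorm l <= k * (outer_row l + first_coef l * inner_norm) ^+ 2) ->
  sqnorm (apply_mx (absmx (Bmat Q)) x) <= k * sqnorm (apply_mx (absmx (Bmat P)) collapsed).
Proof.
move=> block_le; apply: le_trans (sqnorm_apply_mx_abs _ _) _ => [r c|].
  exact: cabs_ge0.
rewrite sqnorm_apply_comp_abs /sqnorm mulr_sumr; apply: ler_sum => l _.
by rewrite apply_collapsed.
Qed.

End Vector.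

Lemma opnorm_comp_sqr_le k : 0 <= k ->
  (forall x l, block_sqnorm x l <= k * (outer_row x l + first_coef l * inner_norm x) ^+ 2) ->
  opnorm (absmx (Bmat Q)) ^+ 2 <= k * opnorm (absmx (Bmat P)) ^+ 2.
Proof.
move=> k_ge0 block_le; apply: opnorm_sqr_le k_ge0 _ => x x_le1.
by exists (collapsed x); rewrite ?sqnorm_collapsed ?comp_dominated.
Qed.

End CompositionRows.

Section QuarticWeights.
Variables (R : realType) (s1 s2 : R).
Hypotheses (s1_gt0 : 0 < s1) (s2_gt0 : 0 < s2).
Local Notation w := (quartic_weight s1 s2).
Local Notation gain := ((Num.sqrt s1 + Num.sqrt s2) / Num.sqrt (s1 + s2)).

Lemma quartic_weight_ge0 j : 0 <= w j.
Proof. exact: sqrtr_ge0. Qed.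

Lemma sum_quartic_weight_sqr : w ord0 ^+ 2 + w (lift ord0 ord0) ^+ 2 = gain.
Proof.
have sqr_w (s : R) : 0 < s -> Num.sqrt (Num.sqrt (s / (s1 + s2))) ^+ 2 =
    Num.sqrt s / Num.sqrt (s1 + s2).
  have sum_gt0 : 0 < s1 + s2 := addr_gt0 s1_gt0 s2_gt0.
  by move=> s_gt0; rewrite sqr_sqrtr ?sqrtr_ge0 // sqrtrM ?sqrtrV ?ltW.
by rewrite /quartic_weight /= !sqr_w // -mulrDl.
Qed.

Lemma gain_ge1 : 1 <= gain.
Proof.
have d_gt0 : 0 < Num.sqrt (s1 + s2) by rewrite sqrtr_gt0 addr_gt0.
rewrite ler_pdivlMr // mul1r.
have a_ge0 := sqrtr_ge0 s1; have b_ge0 := sqrtr_ge0 s2.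
have a_sqr : Num.sqrt s1 ^+ 2 = s1 by rewrite sqr_sqrtr ?ltW.
have b_sqr : Num.sqrt s2 ^+ 2 = s2 by rewrite sqr_sqrtr ?ltW.
have d_sqr : Num.sqrt (s1 + s2) ^+ 2 = s1 + s2 by rewrite sqr_sqrtr ?addr_ge0 ?ltW.
set a := Num.sqrt s1 in a_ge0 a_sqr *; set b := Num.sqrt s2 in b_ge0 b_sqr *.
set d := Num.sqrt (s1 + s2) in d_gt0 d_sqr *.
nra.
Qed.

Lemma cvnorm_AND_target : cvnorm (sp_t (P_AND s1 s2)) = Num.sqrt gain.
Proof.
rewrite /cvnorm !big_ord_recl big_ord0 addr0 /= !cabs_real.
by rewrite !ger0_norm ?quartic_weight_ge0 // sum_quartic_weight_sqr.
Qed.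

End QuarticWeights.

Section TwoInputBlocks.
Variables (R : realType) (s1 s2 : R) (P : spanprog R) (i0 : sp_idx P).
Hypotheses (s1_gt0 : 0 < s1) (s2_gt0 : 0 < s2).
Hypothesis first_inputE : forall i, (sp_lab P i == 0%N) = (i == i0).
Local Notation w := (quartic_weight s1 s2).
Local Notation gain := ((Num.sqrt s1 + Num.sqrt s2) / Num.sqrt (s1 + s2)).

Lemma block_sqnorm_AND (x : option (rt_idx (P_AND s1 s2) P) -> R) l :
  block_sqnorm first_inputE x l <=
  gain * (outer_row x l + first_coef i0 l * inner_norm first_inputE x) ^+ 2.
Proof.
have gain_ge0 : 0 <= gain := le_trans ler01 (gain_ge1 s1_gt0 s2_gt0).
have [Zl|nZl] := boolP (rt_Z l).
  rewrite block_sqnorm_Z // /comp_row first_coef_Z // !mul0r !addr0 /=.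
  by rewrite cabs_real cvnorm_AND_target // ger0_norm ?sqrtr_ge0 // exprMn sqr_sqrtr.
have inner_row a : \sum_i' cabs (sp_v (P_AND s1 s2) i' a) * inner_coords first_inputE x i'
    = inner_coords first_inputE x a.
  rewrite (bigD1 a) //= eqxx cabs1 mul1r big1 ?addr0 // => i' /negPf /= ->.
  by rewrite cabs0 mul0r.
rewrite block_sqnorm_nZ // (eq_bigr (fun a => (w a * outer_row x l +
    first_coef i0 l * inner_coords first_inputE x a) ^+ 2)) => [|a _]; last first.
  by rewrite /comp_row /= inner_row cabs_real ger0_norm ?quartic_weight_ge0.
rewrite /inner_norm /sqnorm !big_ord_recl !big_ord0 !addr0 -sum_quartic_weight_sqr //.
apply: and_block_ineq; first exact: outer_row_ge0.
  exact: cabs_ge0.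
by rewrite sum_quartic_weight_sqr ?gain_ge1.
Qed.

Lemma block_sqnorm_OR (x : option (rt_idx (P_OR s1 s2) P) -> R) l :
  block_sqnorm first_inputE x l <=
  gain * (outer_row x l + first_coef i0 l * inner_norm first_inputE x) ^+ 2.
Proof.
have gain_ge1 := gain_ge1 s1_gt0 s2_gt0.
have [Zl|nZl] := boolP (rt_Z l).
  rewrite block_sqnorm_Z // /comp_row first_coef_Z // !mul0r !addr0 /=.
  rewrite cabs_real /cvnorm big_ord1 cabs1 expr1n sqrtr1 normr1 mul1r.
  by rewrite ler_peMl ?sqr_ge0.
rewrite block_sqnorm_nZ // big_ord1 /comp_row /= cabs1 mul1r.
rewrite /inner_norm /sqnorm !big_ord_recl !big_ord0 !addr0 /= !cabs_real.
rewrite !ger0_norm ?quartic_weight_ge0 // -sum_quartic_weight_sqr //.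
apply: or_block_ineq;
  by rewrite ?sum_quartic_weight_sqr ?quartic_weight_ge0 ?outer_row_ge0 ?cabs_ge0 ?normr_ge0.
Qed.

End TwoInputBlocks.

Theorem lemma3p4 (R : realType) (P : spanprog R) (n : nat) (s1 s2 : R)
    (P' : spanprog R) :
  sp_wf P ->
  sp_ninp P = n.+1 ->
  #|sp_I P 0| = 1%N ->
  0 < s1 -> 0 < s2 ->
  (P' = P_AND s1 s2 \/ P' = P_OR s1 s2) ->
  opnorm (absmx (Bmat (rtcomp P' P))) ^+ 2 <=
    (Num.sqrt s1 + Num.sqrt s2) / Num.sqrt (s1 + s2) *
    opnorm (absmx (Bmat P)) ^+ 2.
Proof.
move=> _ _ /eqP/cards1P[i0 I1E] s1_gt0 s2_gt0 P'_def.
have first_inputE i : (sp_lab P i == 0%N) = (i == i0).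
  by move/setP/(_ i): I1E; rewrite !inE.
have gain_ge0 := le_trans ler01 (gain_ge1 s1_gt0 s2_gt0).
case: P'_def => ->; apply: (opnorm_comp_sqr_le (first_inputE := first_inputE) gain_ge0).
  exact: block_sqnorm_AND.
exact: block_sqnorm_OR.
Qed.
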